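(* Let $f_0$ be an arithmetic function with $f_0(1)=1$ and let $m>1$. Let $\alpha$ be a finite alphabet and $\mathcal R$ a set of words over $\alpha$ (the $\mathcal R$-restricted words) such that for every $n\ge1$, $f_{m-1}(n)$ equals the number of words of length $n-1$ over $\alpha$ belonging to $\mathcal R$. Let $x$ be a letter not in $\alpha$. Then for all $1\le k\le n$, $c_m(n,k)$ equals the number of $\mathcal R$-restricted words of length $n-1$ over $\alpha\cup\{x\}$ in which $x$ appears exactly $k-1$ times.
   Context: An arithmetic function is a function $f_0:\{1,2,\ldots\}\to\mathbb{C}$. For $m\ge 1$, $f_m$ is the invert transform of $f_{m-1}$, i.e. $f_m(n)=f_{m-1}(n)+\sum_{i=1}^{n-1}f_{m-1}(i)f_m(n-i)$ for $n\ge1$. For $m\ge1$ the numbers $c_m(n,k)$, $0\le k\le n$, are defined by $c_m(0,0)=1$, $c_m(n,0)=0$ for $n\ge1$, and $c_m(n,k)=\sum_{i=1}^{n-k+1}f_{m-1}(i)\,c_m(n-i,k-1)$ for $1\le k\le n$. Words may be empty (length $0$). The restriction $\mathcal R$ concerns only letters of $\alpha$: a word over $\alpha\cup\{x\}$ with exactly $k-1$ occurrences of $x$ is written uniquely as $w_1\,x\,w_2\,x\cdots x\,w_k$ with each $w_j$ a (possibly empty) word over $\alpha$, and it is called $\mathcal R$-restricted if every $w_j$ belongs to $\mathcal R$. *)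

From mathcomp Require Import all_boot all_order all_algebra.
From mathcomp Require Import complex.
From mathcomp Require Import reals.
Set Implicit Arguments. Unset Strict Implicit. Unset Printing Implicit Defensive.
Import Order.TTheory GRing.Theory Num.Theory.
Local Open Scope ring_scope.

(* Arithmetic functions {1,2,...} -> C are represented as nat -> C;
   the value at 0 is irrelevant. *)
Section Defs.
Variable C : comRingType.

Fixpoint invert_aux (g : nat -> C) (fuel n : nat) : C :=
  match fuel with
  | 0 => 0
  | fuel'.+1 => g n + \sum_(1 <= i < n) g i * invert_aux g fuel' (n - i)
  end.

Definition invert (g : nat -> C) (n : nat) : C := invert_aux g n n.

Definition f_iter (f0 : nat -> C) (m : nat) : nat -> C := iter m invert f0.

Fixpoint c_aux (g : nat -> C) (n k : nat) : C :=
  match k with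
  | 0 => (n == 0%N)%:R
  | k'.+1 => \sum_(1 <= i < (n - k).+2) g i * c_aux g (n - i) k'
  end.

Definition c_num (f0 : nat -> C) (m n k : nat) : C := c_aux (f_iter f0 m.-1) n k.
End Defs.

(* Words over alpha ∪ {x} are seq (option T), with x := None.
   blocks w = [w_1; ...; w_k], the maximal x-free factors, w = w_1 x w_2 x ... x w_k. *)
Fixpoint blocks (T : Type) (w : seq (option T)) : seq (seq T) :=
  match w with
  | [::] => [:: [::]]
  | None :: w' => [::] :: blocks w'
  | Some a :: w' =>
      match blocks w' with
      | b :: bs => (a :: b) :: bs
      | [::] => [:: [:: a]]
      end
  end.

Definition restricted (T : Type) (R : pred (seq T)) (w : seq (option T)) : bool :=
  all R (blocks w).

From mathcomp Require Import all_boot all_order all_algebra.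
From mathcomp Require Import complex.
From mathcomp Require Import reals.
From mathcomp Require Import zify.
Set Implicit Arguments. Unset Strict Implicit.
Import Order.TTheory GRing.Theory Num.Theory.

(* Cutting an R-restricted word with j+1 occurrences of x at its first x
   leaves an x-free word in R, of some length l, followed by an R-restricted
   word with j occurrences of x.  As f_{m-1}(l+1) counts the x-free words of
   length l in R, the numbers of restricted words satisfy the same
   convolution recurrence as c_m, which only involves f_{m-1}. *)

Section TupleSums.
Variables (R : Type) (idx : R) (op : Monoid.com_law idx) (X : finType).

Lemma big_tuple0 (F : seq X -> R) : \big[op/idx]_(t : 0.-tuple X) F t = F [::].
Proof.
rewrite (eq_bigr (fun _ => F [::])) => [|t _]; last by rewrite tuple0.
by rewrite big_const card_tuple expn0 /= Monoid.mulm1.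
Qed.

Lemma big_tuple_cons n (F : seq X -> R) :
  \big[op/idx]_(t : n.+1.-tuple X) F t =
  \big[op/idx]_(a : X) \big[op/idx]_(t : n.-tuple X) F (a :: t).
Proof.
rewrite (reindex (fun p : X * n.-tuple X => [tuple of p.1 :: p.2])) /=; last first.
  exists (fun t : n.+1.-tuple X => (thead t, [tuple of behead t])).
    by move=> [a t] _; congr (_, _); apply: val_inj.
  by move=> t _; case/tupleP: t => a t; apply: val_inj.
by rewrite -(pair_big predT predT (fun a (t : n.-tuple X) => F (a :: t))).
Qed.

Lemma big_option (F : option X -> R) :
  \big[op/idx]_(a : option X) F a = op (F None) (\big[op/idx]_(b : X) F (Some b)).
Proof.
rewrite (bigD1 None) //=; congr (op _ _).
rewrite (reindex_omap Some id) /= => [|[]//].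
by apply: eq_bigl => b; rewrite eqxx.
Qed.

End TupleSums.

Section ConvolutionPowers.
Local Open Scope ring_scope.
Variables (C : comNzRingType) (g : nat -> C) (G : nat -> nat -> C).
Hypothesis G0 : forall L, G L 0 = g L.+1.
Hypothesis GS : forall L j, G L j.+1 = \sum_(l < L) g l.+1 * G (L - l.+1)%N j.

Lemma convolution_eq0 L j : (L < j)%N -> G L j = 0.
Proof.
elim: j L => [//|j IH] L ltLj; rewrite GS big1 // => l _.
by rewrite IH ?mulr0 //; have := ltn_ord l; lia.
Qed.

Lemma c_auxS n k :
  c_aux g n k.+1 = \sum_(1 <= i < (n - k.+1).+2) g i * c_aux g (n - i) k.
Proof. by []. Qed.

(* [c_aux g n k] is junk outside [1 <= k <= n], e.g. [c_aux g 0 1 = g 1]. *)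
Lemma c_aux_convolution j L : (j <= L)%N -> c_aux g L.+1 j.+1 = G L j.
Proof.
elim: j L => [|j IH] L lejL.
  rewrite c_auxS subn1 big_nat_recr //= subnn mulr1 G0 big_nat big1 ?add0r //.
  by move=> i /andP[_ ltiL]; rewrite subn_eq0 leqNgt ltiL mulr0.
rewrite c_auxS GS big_add1 -(big_mkord xpredT (fun l => g l.+1 * G (L - l.+1)%N j)).
rewrite [RHS](big_cat_nat _ (n := L - j)) ?leq_subr //.
have tail0 : \sum_(L - j <= l < L) g l.+1 * G (L - l.+1)%N j = 0.
  rewrite big_nat big1 // => l /andP[lelL ltlL].
  by rewrite convolution_eq0 ?mulr0 //; lia.
rewrite tail0 [RHS]/= addr0.
rewrite (_ : (L.+1 - j.+2).+2.-1 = L - j)%N; last by lia.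
apply: eq_big_nat => l /andP[_ ltl].
by rewrite subSS -IH; [congr (_ * c_aux _ _ _); lia | lia].
Qed.

End ConvolutionPowers.

Lemma card_pred_sum (X : finType) (P : pred X) : #|[pred x | P x]| = \sum_(x : X) P x.
Proof. by rewrite -sum1_card big_mkcond. Qed.

Section RestrictedWords.
Variables (T : finType) (R : pred (seq T)).

Lemma blocks_neq0 (w : seq (option T)) : blocks w != [::].
Proof. by case: w => [|[a|] w] //=; case: blocks. Qed.

Lemma blocks_cat_letters p (w : seq (option T)) :
  blocks (map Some p ++ w) = (p ++ head [::] (blocks w)) :: behead (blocks w).
Proof.
elim: p => [|a p /= ->] //=.
by case: (blocks w) (blocks_neq0 w).
Qed.

Lemma restricted_letters p : restricted R (map Some p) = R p.
Proof. by rewrite /restricted -[map _ _]cats0 blocks_cat_letters /= cats0 andbT. Qed.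

Lemma restricted_cat_x p (w : seq (option T)) :
  restricted R (map Some p ++ None :: w) = R p && restricted R w.
Proof. by rewrite /restricted blocks_cat_letters cats0. Qed.

(* [p] is the part of the first block read so far; generalising over it lets
   the counts be computed letter by letter. *)
Definition nblock L p : nat := \sum_(t : L.-tuple T) R (p ++ t).

Definition nrestricted L j p : nat := \sum_(t : L.-tuple (option T))
  ((count_mem None t == j) && restricted R (map Some p ++ t)).

Lemma nblock0 p : nblock 0 p = R p.
Proof. by rewrite /nblock (big_tuple0 _ (fun t => R (p ++ t) : nat)) cats0. Qed.

Lemma nblockS L p : nblock L.+1 p = \sum_(a : T) nblock L (rcons p a).
Proof.
rewrite /nblock (big_tuple_cons _ _ (fun t => R (p ++ t) : nat)).
by apply: eq_bigr => a _; apply: eq_bigr => t _; rewrite cat_rcons.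
Qed.

Lemma nrestricted0 j p : nrestricted 0 j p = (j == 0) && R p.
Proof.
pose F t := (count_mem None t == j) && restricted R (map Some p ++ t) : nat.
by rewrite /nrestricted (big_tuple0 _ F) /F cats0 restricted_letters eq_sym.
Qed.

Lemma nrestrictedS L j p : nrestricted L.+1 j p =
  (if j is j'.+1 then R p * nrestricted L j' [::] else 0) +
  \sum_(a : T) nrestricted L j (rcons p a).
Proof.
pose F t := (count_mem None t == j) && restricted R (map Some p ++ t) : nat.
rewrite /nrestricted (big_tuple_cons _ _ F) big_option /F {F}; congr (_ + _).
  case: j => [|j]; first by rewrite big1.
  rewrite big_distrr; apply: eq_bigr => t _.
  by rewrite /= restricted_cat_x eqSS; case: (R p); rewrite ?mul0n ?mul1n ?andbF.
apply: eq_bigr => a _; apply: eq_bigr => t _.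
by rewrite map_rcons cat_rcons.
Qed.

Lemma nrestricted_no_x L p : nrestricted L 0 p = nblock L p.
Proof.
elim: L p => [|L IH] p; first by rewrite nrestricted0 nblock0.
by rewrite nrestrictedS nblockS add0n; apply: eq_bigr => a _; rewrite IH.
Qed.

Lemma nrestricted_first_x L j p :
  nrestricted L j.+1 p = \sum_(l < L) nblock l p * nrestricted (L - l.+1) j [::].
Proof.
elim: L p => [|L IH] p; first by rewrite nrestricted0 big_ord0.
rewrite nrestrictedS big_ord_recl nblock0 subn1; congr (_ + _).
under eq_bigr do rewrite IH.
rewrite exchange_big; apply: eq_bigr => l _.
by rewrite nblockS big_distrl subSS.
Qed.

End RestrictedWords.

Local Open Scope ring_scope.
Local Open Scope complex_scope.

Theorem proposition14 (Rr : realType) (f0 : nat -> Rr[i]) (m : nat)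
  (T : finType) (R : pred (seq T)) :
  f0 1%N = 1 -> (1 < m)%N ->
  (forall n : nat, (1 <= n)%N ->
     f_iter f0 m.-1 n = (#|[pred w : (n.-1).-tuple T | R w]|)%:R) ->
  forall n k : nat, (1 <= k <= n)%N ->
    c_num f0 m n k =
    (#|[pred w : (n.-1).-tuple (option T) |
         (count_mem None w == k.-1) && restricted R w]|)%:R.
Proof.
move=> _ _ f_count [|L] [|j] // le_jL.
have f_nblock l : f_iter f0 m.-1 l.+1 = (nblock R l [::])%:R.
  by rewrite f_count // card_pred_sum.
rewrite card_pred_sum.
apply: (c_aux_convolution (G := fun n i => (nrestricted R n i [::])%:R)) => //.
  by move=> n; rewrite nrestricted_no_x f_nblock.
move=> n i; rewrite nrestricted_first_x natr_sum.
by apply: eq_bigr => l _; rewrite natrM f_nblock.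
Qed.
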